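(* Let $(K_i)_{i\in\mathbb N}$ be number fields with $K_i\subseteq K_{i+1}$ for all $i$ and $\overline{\mathbb Q}=\bigcup_{i}K_i$. For each $i\in\mathbb N$ and each non-Archimedean place $v$ of $K_i$ let $d_i(v)\in\mathbb Q$, and assume $d_i(v)=\sum_{w\in W_v(K_{i+1}/K_i)}d_{i+1}(w)$ for all $i$ and all non-Archimedean places $v$ of $K_i$. Then there exists a unique consistent map $c:\mathcal J\to\mathbb Q$ such that $c(K_i,v)=d_i(v)$ for all $i\in\mathbb N$ and all non-Archimedean places $v$ of $K_i$.
   Context: $\overline{\mathbb Q}$ is an algebraic closure of $\mathbb Q$. For number fields $K\subseteq L$ and a place $v$ of $K$, $W_v(L/K)$ denotes the set of places of $L$ dividing $v$. $\mathcal J$ is the set of pairs $(K,v)$ with $K\subseteq\overline{\mathbb Q}$ a number field and $v$ a non-Archimedean place of $K$. A map $c:\mathcal J\to\mathbb Q$ is consistent if $c(K,v)=\sum_{w\in W_v(L/K)}c(L,w)$ for all number fields $K$, all finite extensions $L/K$, and all non-Archimedean places $v$ of $K$. *)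

(* algC (from mathcomp.field.algC) is used as the algebraic
   closure Qbar of Q; sets/finite sums from mathcomp-analysis (classical). *)
From HB Require Import structures.
From mathcomp Require Import all_boot all_order all_algebra.
From mathcomp Require Import algC algnum.
From mathcomp Require Import boolp classical_sets fsbigop.

Set Implicit Arguments.
Unset Strict Implicit.
Unset Printing Implicit Defensive.
Import Order.TTheory GRing.Theory Num.Theory.
Local Open Scope classical_set_scope.
Local Open Scope ring_scope.

Definition finite_dim_over_Q (K : set algC) : Prop :=
  exists s : seq algC, (forall i : 'I_(size s), K s`_i) /\
    forall x, K x -> exists a : 'I_(size s) -> rat,
      x = \sum_(i < size s) ratr (a i) * s`_i.

Definition is_number_field (K : set algC) : Prop :=
  [/\ K 0 /\ K 1,
      (forall x y, K x -> K y -> K (x - y)),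
      (forall x y, K x -> K y -> K (x * y)),
      (forall x, K x -> K x^-1) &
      finite_dim_over_Q K].

Definition ring_of_integers (K : set algC) : set algC :=
  [set x | K x /\ x \in Aint].

(* Non-Archimedean places of a number field K, identified (as usual) with the
   nonzero prime ideals of O_K, represented as subsets of algC. *)
Definition is_nonarch_place (K : set algC) (v : set algC) : Prop :=
  let O := ring_of_integers K in
  [/\ v `<=` O /\ v 0,
      (forall x y, v x -> v y -> v (x - y)) /\
      (forall a x, O a -> v x -> v (a * x)),
      ~ v 1,
      (exists x, v x /\ x != 0) &
      (forall a b, O a -> O b -> v (a * b) -> v a \/ v b)].

(* W_v(L/K): places w of L lying above v, i.e. w ∩ K = v (equivalently
   w ∩ O_K = v, as w ⊆ O_L). *)
Definition places_above (L K v : set algC) : set (set algC) :=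
  [set w | is_nonarch_place L w /\ w `&` K = v].

Definition in_J (K v : set algC) : Prop := is_number_field K /\ is_nonarch_place K v.

(* Consistency of c : J -> Q (c is given as a function on all pairs of sets,
   only its values on J matter). *)
Definition consistent (c : set algC -> set algC -> rat) : Prop :=
  forall K L v, is_number_field K -> is_number_field L -> K `<=` L ->
    is_nonarch_place K v ->
    c K v = \sum_(w \in places_above L K v) c L w.

(* A number field K lies in some K_i, and a place v of K has only finitely
   many places above it in K_i.  Indeed, distinct places above v are
   incomparable, so given more than [K_i : Q] of them, W_1, ..., W_k, products
   of separating elements give e_j in O_{K_i} lying in every W_l except W_j.
   A Z-linear relation among the e_j, divided by the generator of v ∩ Z until
   some coefficient a_j is not in v, puts a_j e_j in W_j, although neither a_j
   nor e_j lies in the prime W_j.  Sums over places above are therefore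
   transitive in towers, so c(K, v) := Σ_{w | v} d_i(w), taken over the places
   of any K_i containing K, does not depend on i; it is consistent and extends
   d, and consistency of any other such c' over K ⊆ K_i forces c' = c. *)

From HB Require Import structures.
From mathcomp Require Import all_boot all_order all_algebra.
From mathcomp Require Import algC algnum.
From mathcomp Require Import boolp classical_sets cardinality fsbigop.
From mathcomp Require Import zify.
Import Order.TTheory GRing.Theory Num.Theory.
Local Open Scope classical_set_scope.
Local Open Scope ring_scope.

Set Implicit Arguments.
Unset Strict Implicit.
Unset Printing Implicit Defensive.

Section NumberField.
Variable K : set algC.
Hypothesis nfK : is_number_field K.

Lemma nf0 : K 0. Proof. by case: nfK => -[]. Qed.
Lemma nf1 : K 1. Proof. by case: nfK => -[]. Qed.
Lemma nfB x y : K x -> K y -> K (x - y). Proof. by case: nfK => _ + _ _ _; apply. Qed.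
Lemma nfM x y : K x -> K y -> K (x * y). Proof. by case: nfK => _ _ + _ _; apply. Qed.
Lemma nfV x : K x -> K x^-1. Proof. by case: nfK => _ _ _ + _; apply. Qed.
Lemma nfN x : K x -> K (- x).
Proof. by move=> Kx; rewrite -sub0r; apply: nfB => //; apply: nf0. Qed.
Lemma nfD x y : K x -> K y -> K (x + y).
Proof. by move=> Kx Ky; rewrite -[y]opprK; apply: nfB => //; apply: nfN. Qed.

Lemma nf_nat n : K n%:R.
Proof.
by elim: n => [|n IHn]; [apply: nf0 | rewrite mulrSr; apply: nfD => //; apply: nf1].
Qed.

Lemma nf_int (z : int) : K z%:~R.
Proof. by case: z => n; rewrite ?NegzE ?mulrNz; [|apply: nfN]; apply: nf_nat. Qed.

Lemma nf_rat q : K (ratr q).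
Proof. by rewrite /ratr; apply: nfM; [|apply: nfV]; apply: nf_int. Qed.

Lemma nf_sum (I : Type) (r : seq I) (P : pred I) (F : I -> algC) :
  (forall i, P i -> K (F i)) -> K (\sum_(i <- r | P i) F i).
Proof. by move=> KF; apply: big_ind => //; [exact: nf0 | exact: nfD]. Qed.

Local Notation O := (ring_of_integers K).

Lemma roi_int (z : int) : O z%:~R.
Proof. by split; [apply: nf_int | apply: Aint_int]. Qed.

Lemma roi1 : O 1. Proof. exact: (roi_int 1). Qed.

Lemma roiD x y : O x -> O y -> O (x + y).
Proof. by move=> [Kx Ax] [Ky Ay]; split; [apply: nfD | apply: rpredD]. Qed.

Lemma roiM x y : O x -> O y -> O (x * y).
Proof. by move=> [Kx Ax] [Ky Ay]; split; [apply: nfM | apply: rpredM]. Qed.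

Lemma roi_prod (I : Type) (r : seq I) (P : pred I) (F : I -> algC) :
  (forall i, P i -> O (F i)) -> O (\prod_(i <- r | P i) F i).
Proof. by move=> OF; apply: big_ind => //; [exact: roi1 | exact: roiM]. Qed.

Lemma roi_horner (p : {poly algC}) a :
  p \is a polyOver Num.int -> O a -> O p.[a].
Proof.
move=> /polyOverP pZ Oa; rewrite horner_coef; apply: big_ind => //.
- exact: (roi_int 0).
- exact: roiD.
move=> i _; apply: roiM; first by have /intrP[z ->] := pZ i; apply: roi_int.
by elim: (nat_of_ord i) => [|n IHn]; [apply: roi1 | rewrite exprS; apply: roiM].
Qed.

End NumberField.

Lemma roiS (K L : set algC) x :
  K `<=` L -> ring_of_integers K x -> ring_of_integers L x.
Proof. by move=> KL [Kx Ax]; split => //; apply: KL. Qed.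

Section Place.
Variables K v : set algC.
Hypothesis hv : is_nonarch_place K v.
Local Notation O := (ring_of_integers K).

Lemma place_roi x : v x -> O x. Proof. by case: hv => -[+ _] _ _ _ _; apply. Qed.
Lemma place_sub x : v x -> K x. Proof. by move=> /place_roi[]. Qed.
Lemma place0 : v 0. Proof. by case: hv => -[]. Qed.
Lemma placeB x y : v x -> v y -> v (x - y). Proof. by case: hv => _ [+ _] _ _ _; apply. Qed.
Lemma placeM a x : O a -> v x -> v (a * x). Proof. by case: hv => _ [_ +] _ _ _; apply. Qed.
Lemma placeMr a x : O a -> v x -> v (x * a). Proof. by rewrite mulrC; apply: placeM. Qed.
Lemma place1 : ~ v 1. Proof. by case: hv. Qed.
Lemma place_neq0 : exists2 x, v x & x != 0.
Proof. by case: hv => _ _ _ [x [vx x_neq0]] _; exists x. Qed.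
Lemma place_prime a b : O a -> O b -> v (a * b) -> v a \/ v b.
Proof. by case: hv => _ _ _ _; apply. Qed.
Lemma placeN x : v x -> v (- x).
Proof. by move=> vx; rewrite -sub0r; apply: placeB => //; apply: place0. Qed.
Lemma placeD x y : v x -> v y -> v (x + y).
Proof. by move=> vx vy; rewrite -[y]opprK; apply: placeB => //; apply: placeN. Qed.
Lemma place_sum (I : Type) (r : seq I) (P : pred I) (F : I -> algC) :
  (forall i, P i -> v (F i)) -> v (\sum_(i <- r | P i) F i).
Proof. by move=> vF; apply: big_ind => //; [exact: place0 | exact: placeD]. Qed.

Lemma place_prod_notin (I : Type) (r : seq I) (P : pred I) (F : I -> algC) :
  is_number_field K -> (forall i, P i -> O (F i) /\ ~ v (F i)) ->
  ~ v (\prod_(i <- r | P i) F i).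
Proof.
move=> nfK hF; suff [] : O (\prod_(i <- r | P i) F i) /\ ~ v (\prod_(i <- r | P i) F i) by [].
apply: (big_ind (fun y => O y /\ ~ v y)); first by split; [apply: roi1 | apply: place1].
  by move=> x y [Ox nx] [Oy ny]; split; [apply: roiM | case/(place_prime Ox Oy)].
exact: hF.
Qed.

End Place.

Lemma coef_MXaddC (R : nzRingType) (p : {poly R}) c k :
  (p * 'X + c%:P)`_k = if k is k'.+1 then p`_k' else c.
Proof. by rewrite coefD coefMX coefC; case: k => [|k] /=; rewrite ?add0r ?addr0. Qed.

Lemma polyOver_MXaddC (R : nzRingType) (S : addrClosed R) (p : {poly R}) c :
  (p * 'X + c%:P \is a polyOver S) = (p \is a polyOver S) && (c \in S).
Proof.
apply/polyOverP/andP => [pcS | [/polyOverP pS cS] [|k]]; rewrite ?coef_MXaddC //.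
by split; [apply/polyOverP => k; have := pcS k.+1 | have := pcS 0%N]; rewrite coef_MXaddC.
Qed.

Lemma Aint_minCpoly x : x \in Aint -> minCpoly x \is a polyOver Num.int.
Proof. by rewrite unfold_in. Qed.

Section PlaceOverZ.
Variables K v : set algC.
Hypotheses (nfK : is_number_field K) (hv : is_nonarch_place K v).

(* The lowest nonzero coefficient c of p is - q.[x] * x for an integral q. *)
Lemma place_root_coef (p : {poly algC}) x :
  p \is a polyOver Num.int -> p != 0 -> v x -> x != 0 -> root p x ->
  exists2 k, p`_k != 0 & v p`_k.
Proof.
move=> + + vx x_neq0; elim/poly_ind: p => [|p c IHp]; first by rewrite eqxx.
rewrite polyOver_MXaddC rootE !hornerE => /andP[pZ _] pc_neq0 pc_x.
have [c0 | c_neq0] := eqVneq c 0.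
  move: pc_x pc_neq0; rewrite c0 polyC0 !addr0 mulf_eq0 (negPf x_neq0) orbF.
  move=> px0 p_neq0; have [|k pk_neq0 vpk] := IHp pZ _ px0.
    by apply: contraNneq p_neq0 => ->; rewrite mul0r.
  by exists k.+1; rewrite coefMX.
exists 0%N; rewrite coef_MXaddC //.
have -> : c = - (p.[x] * x) by apply/eqP; rewrite -addr_eq0 addrC.
by apply/(placeN hv)/(placeM hv) => //; apply: roi_horner => //; apply: place_roi vx.
Qed.

Lemma place_int_neq0 : exists2 n : nat, (0 < n)%N & v n%:R.
Proof.
have [x vx x_neq0] := place_neq0 hv; have [_ xA] := place_roi hv vx.
have pZ := Aint_minCpoly xA.
have := place_root_coef pZ (monic_neq0 (minCpoly_monic x)) vx x_neq0.
case/(_ (root_minCpoly x)) => k.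
have /intrP[[n|n] ->] := polyOverP pZ k.
  by rewrite pnatr_eq0 -lt0n => n_gt0 vn; exists n.
by rewrite NegzE mulrNz => _ /(placeN hv); rewrite opprK; exists n.+1.
Qed.

Lemma place_int_dvd :
  exists2 g : nat, (1 < g)%N & forall z : int, v z%:~R -> (g %| `|z|)%N.
Proof.
have [n n_gt0 vn] := place_int_neq0.
pose P m := (0 < m)%N && `[< v m%:R >].
have P_n : P n by rewrite /P n_gt0 asboolT.
have [g /andP[g_gt0 /asboolP vg] g_min] := ex_minnP (ex_intro P n P_n).
have vnat m : v m%:R -> (g %| m)%N.
  move=> vm; apply: contrapT => /negP; rewrite /dvdn -lt0n => r_gt0.
  have vr : v (m %% g)%:R.
    have -> : (m %% g)%:R = m%:R - (m %/ g)%:R * g%:R :> algC.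
      by rewrite {2}(divn_eq m g) natrD natrM addrAC subrr add0r.
    by apply: (placeB hv) => //; apply: (placeM hv) => //; apply: (roi_int nfK (m %/ g)%N).
  have /g_min : P (m %% g)%N by rewrite /P r_gt0 asboolT.
  by rewrite leqNgt ltn_pmod.
exists g => [|[m|m] vz]; last 2 first.
- exact: vnat.
- by apply: vnat; move/(placeN hv): vz; rewrite NegzE mulrNz opprK.
by rewrite ltn_neqAle g_gt0 andbT; apply/eqP => g1; apply: (place1 hv); rewrite -g1 in vg.
Qed.

End PlaceOverZ.

Section Incomparability.
Variables M K v w w' : set algC.
Hypotheses (nfM : is_number_field M) (nfK : is_number_field K).
Hypotheses (hw : places_above M K v w) (hw' : places_above M K v w').
Hypothesis w'w : w' `<=` w.

Let pw := hw.1.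
Let pw' := hw'.1.

Lemma place_below_int (c : algC) : c \in Num.int -> w c -> w' c.
Proof.
move=> /intrP[z ->] wz; have vz : v z%:~R by rewrite -hw.2; split => //; apply: nf_int.
by rewrite -hw'.2 in vz; case: vz.
Qed.

(* If p.[a] = q.[a] * a + c lies in w', then c lies in w, hence in w ∩ K = v,
   hence in w'; so q.[a] * a and, as a is not in w', q.[a] lie in w'. *)
Lemma coef_in_place_below a (p : {poly algC}) : w a -> ~ w' a ->
  p \is a polyOver Num.int -> w' p.[a] -> forall k, w' p`_k.
Proof.
move=> wa w'a; have Oa := place_roi pw wa.
elim/poly_ind: p => [_ _ k|p c IHp]; first by rewrite coef0; apply: place0 pw'.
rewrite polyOver_MXaddC !hornerE => /andP[pZ cZ] w'pac.
have Opa := roi_horner nfM pZ Oa.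
have w'c : w' c.
  apply: (place_below_int (c := c)) => //; rewrite -[c](addKr (p.[a] * a)).
  by apply: (placeD pw); [apply/(placeN pw)/(placeM pw) | apply: w'w].
have w'pa : w' p.[a].
  have : w' (p.[a] * a) by rewrite -[_ * a](addrK c); apply: (placeB pw').
  by case/(place_prime pw' Opa Oa).
by case=> [|k]; rewrite coef_MXaddC //; apply: IHp.
Qed.

Lemma places_above_incomparable : w = w'.
Proof.
apply/seteqP; split => // a wa; apply: contrapT => w'a.
have [_ aA] := place_roi pw wa.
have := coef_in_place_below wa w'a (Aint_minCpoly aA) _ (size (minCpoly a)).-1.
rewrite -lead_coefE (monicP (minCpoly_monic a)) (rootP (root_minCpoly a)).
by move/(_ (place0 pw')); apply: place1 pw'.
Qed.

End Incomparability.

Definition in_Qspan (s : seq algC) (x : algC) : Prop :=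
  exists a : 'I_(size s) -> rat, x = \sum_(i < size s) ratr (a i) * s`_i.

Lemma Qspan_rat_relation (s : seq algC) k (e : 'I_k -> algC) :
  (size s < k)%N -> (forall j, in_Qspan s (e j)) ->
  exists2 u : 'I_k -> rat, (exists j, u j != 0) & \sum_(j < k) ratr (u j) * e j = 0.
Proof.
move=> lt_s_k /choice[A eA].
pose Am : 'M[rat]_(k, size s) := \matrix_(j, i) A j i.
have : kermx Am != 0.
  by rewrite kermx_eq0 -row_leq_rank -ltnNge (leq_ltn_trans (rank_leq_col Am)).
case/rowV0Pn => u /sub_kermxP uA /rV0Pn[j0 uj0_neq0].
exists (fun j => u 0 j); first by exists j0.
under eq_bigr do rewrite eA mulr_sumr.
rewrite exchange_big big1 //= => i _.
transitivity (ratr ((u *m Am) 0 i) * s`_i); last by rewrite uA mxE rmorph0 mul0r.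
rewrite mxE rmorph_sum mulr_suml.
by apply: eq_bigr => j _; rewrite mxE rmorphM mulrA.
Qed.

Lemma int_relation_of_rat k (e : 'I_k -> algC) (u : 'I_k -> rat) :
  (exists j, u j != 0) -> \sum_(j < k) ratr (u j) * e j = 0 ->
  exists2 a : 'I_k -> int, (exists j, a j != 0) & \sum_(j < k) (a j)%:~R * e j = 0.
Proof.
move=> [j0 uj0_neq0] rel; pose D := \prod_(l < k) denq (u l).
exists (fun j => numq (u j) * \prod_(l < k | l != j) denq (u l)).
  exists j0; rewrite mulf_neq0 ?numq_eq0 //.
  by apply/prodf_neq0 => l _; apply: denq_neq0.
have clear_den j : (numq (u j) * \prod_(l < k | l != j) denq (u l))%:~R
    = ratr (u j) * (D%:~R : algC).
  rewrite -[LHS]ratr_int -[D%:~R]ratr_int -rmorphM /=; congr ratr.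
  by rewrite /D [in RHS](bigD1 j) //= !intrM numqE -mulrA.
under eq_bigr do rewrite clear_den mulrAC.
by rewrite -mulr_suml rel mul0r.
Qed.

(* Divide the coefficients by g as long as all of them lie in v; the sum of
   their absolute values strictly decreases. *)
Lemma int_relation_notin_place K v k (e : 'I_k -> algC) (a : 'I_k -> int) :
  is_number_field K -> is_nonarch_place K v ->
  (exists j, a j != 0) -> \sum_(j < k) (a j)%:~R * e j = 0 ->
  exists2 b : 'I_k -> int, (exists j, ~ v (b j)%:~R) & \sum_(j < k) (b j)%:~R * e j = 0.
Proof.
move=> nfK hv; have [g g_gt1 g_dvd] := place_int_dvd nfK hv.
have [N] := ubnP (\sum_(j < k) `|a j|)%N.
elim: N a => // N IHN a lt_aN [j0 aj0_neq0] rel.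
have [|all_v] := pselect (exists j, ~ v (a j)%:~R); first by exists a.
pose b j := (a j %/ g%:Z)%Z.
have ab j : a j = b j * g%:Z.
  by rewrite divzK //; apply: g_dvd; apply: contrapT => ?; apply: all_v; exists j.
have bj0_neq0 : b j0 != 0.
  by apply: contraNneq aj0_neq0; rewrite ab => ->; rewrite mul0r.
apply: (IHN b); last 2 first.
- by exists j0.
- have g_neq0 : (g%:R : algC) != 0 by rewrite pnatr_eq0 -lt0n ltnW.
  apply: (mulfI g_neq0); rewrite mulr0 -[RHS]rel mulr_sumr.
  by apply: eq_bigr => j _; rewrite ab intrM mulrA [g%:R * _]mulrC.
have sum_ab : (\sum_(j < k) `|a j| = (\sum_(j < k) `|b j|) * g)%N.
  by rewrite big_distrl; apply: eq_bigr => j _; rewrite ab abszM.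
have sum_b_gt0 : (0 < \sum_(j < k) `|b j|)%N.
  by rewrite (bigD1 j0) //= ltn_addr // absz_gt0.
rewrite sum_ab in lt_aN; nia.
Qed.

Section FinitelyManyPlacesAbove.
Variables M K v : set algC.
Hypotheses (nfM : is_number_field M) (nfK : is_number_field K).
Hypothesis hv : is_nonarch_place K v.

Lemma places_above_separate w w' : places_above M K v w -> places_above M K v w' ->
  w <> w' -> exists2 x, w x & ~ w' x.
Proof.
move=> hw hw' w_neq_w'; apply: contrapT => no_sep; apply: w_neq_w'.
apply/esym/(places_above_incomparable nfM nfK hw' hw) => x wx.
by apply: contrapT => w'x; apply: no_sep; exists x.
Qed.

Lemma places_above_avoid k (W : 'I_k -> set algC) :
  injective W -> (forall j, places_above M K v (W j)) ->
  exists e : 'I_k -> algC, [/\ forall j, ring_of_integers M (e j),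
    forall l j, l != j -> W l (e j) & forall j, ~ W j (e j)].
Proof.
move=> W_inj hW; have pW j := (hW j).1.
have sep (p : 'I_k * 'I_k) : exists x, p.1 != p.2 -> W p.1 x /\ ~ W p.2 x.
  have [_|p_neq] := eqVneq p.1 p.2; first by exists 0.
  have W_neq : W p.1 <> W p.2 by move/W_inj/eqP; apply/negP.
  by have [x] := places_above_separate (hW p.1) (hW p.2) W_neq; exists x.
have [X hX] := choice sep; have OX l j : l != j -> ring_of_integers M (X (l, j)).
  by move=> /(hX (l, j))[/(place_roi (pW l))].
exists (fun j => \prod_(l < k | l != j) X (l, j)); split.
- by move=> j; apply: roi_prod => // l; apply: OX.
- move=> l j l_neq_j; rewrite (bigD1 l) //=; apply: (placeMr (pW l)).
    by apply: roi_prod => // m /andP[+ _]; apply: OX.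
  by have [] := hX (l, j) l_neq_j.
- move=> j; apply: (place_prod_notin (pW j)) => // l l_neq_j.
  by split; [apply: OX | case: (hX (l, j) l_neq_j)].
Qed.

Lemma places_above_card (s : seq algC) k (W : 'I_k -> set algC) :
  (forall x, M x -> in_Qspan s x) ->
  injective W -> (forall j, places_above M K v (W j)) -> (k <= size s)%N.
Proof.
move=> spanM W_inj hW; rewrite leqNgt; apply/negP => lt_s_k.
have [e [Oe e_in e_out]] := places_above_avoid W_inj hW.
have [u u_neq0 urel] := Qspan_rat_relation lt_s_k (fun j => spanM _ (Oe j).1).
have [a a_neq0 arel] := int_relation_of_rat u_neq0 urel.
have [b [j vbj] brel] := int_relation_notin_place nfK hv a_neq0 arel.
have [pWj WjK] := hW j.
have : W j ((b j)%:~R * e j).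
  have -> : (b j)%:~R * e j = - \sum_(l < k | l != j) (b l)%:~R * e l.
    by rewrite (bigD1 j) //= in brel; apply/eqP; rewrite -addr_eq0 brel.
  apply: (placeN pWj); apply: (place_sum pWj) => l l_neq_j.
  by apply: (placeM pWj); [apply: (roi_int nfM) | apply: e_in; rewrite eq_sym].
case/(place_prime pWj (roi_int nfM (b j)) (Oe j)) => [Wbj|]; last exact: e_out.
by apply: vbj; rewrite -WjK; split => //; apply: nf_int.
Qed.

Lemma places_above_finite : finite_set (places_above M K v).
Proof.
have [_ _ _ _ [s [_ spanM]]] := nfM.
apply: contrapT => /infiniteP/pcard_leP/injfunPex[f fA f_inj].
have W_inj : injective (fun j : 'I_(size s).+1 => f j).
  by move=> j l /(f_inj _ _ (in_setT _) (in_setT _)); apply: val_inj.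
by have := places_above_card spanM W_inj (fun j => fA _ I); rewrite ltnn.
Qed.

End FinitelyManyPlacesAbove.

Lemma fsbig_fibers (R : Type) (idx : R) (op : Monoid.com_law idx)
    (I J : choiceType) (A : set I) (P : set J) (h : I -> J) (F : I -> R) :
  finite_set A -> (forall i, A i -> P (h i)) ->
  \big[op/idx]_(j \in P) \big[op/idx]_(i \in A `&` h @^-1` [set j]) F i
  = \big[op/idx]_(i \in A) F i.
Proof.
move=> finA hAP; under eq_fsbigr do rewrite fsbig_mkcondr.
rewrite -(fsbig_widen (h @` A)); first last.
- move=> j [_ /= not_hAj]; apply: fsbig1 => i Ai.
  by case: ifPn => // /set_mem hij; case: not_hAj; exists i.
- by move=> _ [i Ai <-]; apply: hAP.
rewrite exchange_fsbig //; last exact: finite_image.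
apply: eq_fsbigr => i /set_mem Ai; rewrite -(fsbig_widen [set h i]); first last.
- by move=> j [_ /= hij]; case: ifPn => // /set_mem /esym.
- by move=> _ ->; exists i.
by rewrite fsbig_set1 ifT // inE.
Qed.

Section Restriction.
Variables M L K v u : set algC.
Hypotheses (nfL : is_number_field L) (KL : K `<=` L) (LM : L `<=` M).
Hypothesis hv : is_nonarch_place K v.

Lemma place_restrict : places_above M K v u -> places_above L K v (u `&` L).
Proof.
move=> [hu uK]; split; last by rewrite -setIA (setIidr KL).
have vu : v `<=` u by rewrite -uK => x [].
split.
- split; last by split; [apply: place0 hu | apply: nf0 nfL].
  by move=> x [/(place_roi hu)[_ xA] Lx].
- split=> [x y [ux Lx] [uy Ly]|a x [La aA] [ux Lx]].
    by split; [apply: (placeB hu) | apply: nfB].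
  by split; [apply: (placeM hu) => //; apply: roiS LM _ | apply: nfM].
- by move=> [] /(place1 hu).
- have [x vx x_neq0] := place_neq0 hv.
  by exists x; split => //; split; [apply: vu | apply/KL/(place_sub hv)].
- move=> a b Oa Ob [uab Lab].
  by case: (place_prime hu (roiS LM Oa) (roiS LM Ob) uab) => [ua|ub];
    [left; split => //; case: Oa | right; split => //; case: Ob].
Qed.

Lemma places_above_tower (w : set algC) : places_above L K v w ->
  places_above M L w = places_above M K v `&` (fun u => u `&` L) @^-1` [set w].
Proof.
move=> [_ wK]; apply/seteqP; split => u' /=.
  by move=> [hu' u'L]; split => //; split => //; rewrite -wK -u'L -setIA (setIidr KL).
by move=> [[hu' _] u'L].
Qed.

End Restriction.

Lemma sum_places_above_tower M L K v (f : set algC -> rat) :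
  is_number_field M -> is_number_field L -> is_number_field K ->
  K `<=` L -> L `<=` M -> is_nonarch_place K v ->
  \sum_(w \in places_above L K v) \sum_(u \in places_above M L w) f u
  = \sum_(u \in places_above M K v) f u.
Proof.
move=> nfM nfL nfK KL LM hv.
have restrict u := place_restrict nfL KL LM hv (u := u).
rewrite -(fsbig_fibers _ f (places_above_finite nfM nfK hv) restrict).
by apply: eq_fsbigr => w /set_mem hw; rewrite (places_above_tower M KL hw).
Qed.

Lemma places_above_id K v : is_nonarch_place K v -> places_above K K v = [set v].
Proof.
move=> hv; apply/seteqP; split => w /=.
  by move=> [hw <-]; rewrite (setIidl (fun x => place_sub hw (x := x))).
by move=> ->; split => //; rewrite (setIidl (fun x => place_sub hv (x := x))).
Qed.

Section Tower.
Variable Kf : nat -> set algC.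
Hypothesis nfKf : forall i, is_number_field (Kf i).
Hypothesis Kf_incr : forall i, Kf i `<=` Kf i.+1.
Hypothesis Kf_cover : forall x, exists i, Kf i x.
Variable d : nat -> set algC -> rat.
Hypothesis d_consistent : forall i v, is_nonarch_place (Kf i) v ->
  d i v = \sum_(w \in places_above (Kf i.+1) (Kf i) v) d i.+1 w.

Lemma Kf_homo : {homo Kf : i j / (i <= j)%N >-> i `<=` j}.
Proof. by apply: homo_leq => [A x |B A C AB BC x /AB /BC |]. Qed.

Lemma number_field_sub_Kf K : is_number_field K -> exists i, K `<=` Kf i.
Proof.
case=> _ _ _ _ [s [_ spanK]].
have /choice[lvl s_Kf] : forall j : 'I_(size s), exists i, Kf i s`_j.
  by move=> j; apply: Kf_cover.
exists (\max_j lvl j) => x /spanK[a ->]; apply: nf_sum => // j _.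
apply: nfM => //; first exact: nf_rat.
exact: Kf_homo (leq_bigmax j) _ (s_Kf j).
Qed.

Definition tower_level (K : set algC) : nat := xget 0%N [set i | K `<=` Kf i].

Lemma tower_levelP K : is_number_field K -> K `<=` Kf (tower_level K).
Proof. by move=> /number_field_sub_Kf; apply: xgetPex. Qed.

Definition tower_sum (i : nat) (K v : set algC) : rat :=
  \sum_(w \in places_above (Kf i) K v) d i w.

Lemma tower_sumS K v i : is_number_field K -> is_nonarch_place K v -> K `<=` Kf i ->
  tower_sum i.+1 K v = tower_sum i K v.
Proof.
move=> nfK hv K_Kfi; rewrite /tower_sum.
rewrite -(sum_places_above_tower _ (nfKf _) (nfKf _) nfK K_Kfi (@Kf_incr i) hv).
by apply: eq_fsbigr => w /set_mem[hw _]; rewrite d_consistent.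
Qed.

Lemma tower_sum_eq K v i j : is_number_field K -> is_nonarch_place K v ->
  K `<=` Kf i -> K `<=` Kf j -> tower_sum i K v = tower_sum j K v.
Proof.
move=> nfK hv; wlog le_ij : i j / (i <= j)%N => [Hwlog K_Kfi K_Kfj|K_Kfi _].
  by have [/Hwlog|/ltnW/Hwlog] := leqP i j; [apply | move=> H; rewrite H].
elim: j le_ij => [|j IHj]; first by rewrite leqn0 => /eqP ->.
rewrite leq_eqVlt ltnS => /orP[/eqP -> // | le_ij]; rewrite (IHj le_ij) tower_sumS //.
exact: subset_trans K_Kfi (Kf_homo le_ij).
Qed.

Definition tower_extension (K v : set algC) : rat := tower_sum (tower_level K) K v.

Lemma tower_extension_consistent : consistent tower_extension.
Proof.
move=> K L v nfK nfL KL hv; have L_Kf := tower_levelP nfL.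
rewrite /tower_extension (tower_sum_eq _ hv (tower_levelP nfK) (subset_trans KL L_Kf)) //.
by rewrite /tower_sum -(sum_places_above_tower _ (nfKf _) nfL nfK KL L_Kf hv).
Qed.

Lemma tower_extension_Kf i v : is_nonarch_place (Kf i) v -> tower_extension (Kf i) v = d i v.
Proof.
move=> hv; have Kf_lvl := tower_levelP (nfKf i).
rewrite /tower_extension -(tower_sum_eq (nfKf i) hv (@subset_refl _ (Kf i)) Kf_lvl).
by rewrite /tower_sum places_above_id // fsbig_set1.
Qed.

Lemma tower_extension_unique (c : set algC -> set algC -> rat) : consistent c ->
  (forall i v, is_nonarch_place (Kf i) v -> c (Kf i) v = d i v) ->
  forall K v, in_J K v -> c K v = tower_extension K v.
Proof.
move=> c_consistent c_Kf K v [nfK hv].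
rewrite (c_consistent K _ v nfK (nfKf _) (tower_levelP nfK) hv).
by apply: eq_fsbigr => w /set_mem[hw _]; apply: c_Kf.
Qed.

End Tower.

Unset Implicit Arguments.
Set Strict Implicit.


Theorem lemma4p2 (Kf : nat -> set algC) (d : nat -> set algC -> rat)
  (hK : forall i, is_number_field (Kf i))
  (hinc : forall i, Kf i `<=` Kf i.+1)
  (hcov : forall x : algC, exists i, Kf i x)
  (hd : forall i v, is_nonarch_place (Kf i) v ->
          d i v = \sum_(w \in places_above (Kf i.+1) (Kf i) v) d i.+1 w) :
  exists c : set algC -> set algC -> rat,
    (consistent c /\
     forall i v, is_nonarch_place (Kf i) v -> c (Kf i) v = d i v) /\
    forall c' : set algC -> set algC -> rat,
      consistent c' ->
      (forall i v, is_nonarch_place (Kf i) v -> c' (Kf i) v = d i v) ->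
      forall K v, in_J K v -> c' K v = c K v.
Proof.
exists (tower_extension Kf d); split; first split.
- exact: (tower_extension_consistent hK hinc hcov hd).
- exact: (tower_extension_Kf hK hinc hcov hd).
- exact: (tower_extension_unique hK hinc hcov).
Qed.
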